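(* Let $(a_n)_{n\ge0}$ be a sequence of real numbers such that for every $C_1>1$ there exists $C_0\ge0$ such that for every $q\ge2$ and all integers $m_1,\dots,m_q\ge0$, $$a_{m_1+\cdots+m_q}\le C_1\sum_{i=1}^q a_{m_i}+qC_0.$$ Then $\liminf_{n\to+\infty}\frac1n a_n=\limsup_{n\to+\infty}\frac1n a_n$. *)

From HB Require Import structures.
From mathcomp Require Import all_boot all_order all_algebra.
From mathcomp Require Import all_classical all_reals all_analysis.

From HB Require Import structures.
From mathcomp Require Import all_boot all_order all_algebra.
From mathcomp Require Import all_classical all_reals all_analysis.
From mathcomp Require Import ring lra.
Import Order.TTheory GRing.Theory Num.Theory.
Local Open Scope classical_set_scope.
Local Open Scope ring_scope.

(* Write m = k n + r with r < n and cut m into k blocks of length n and one of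
   length r: the hypothesis with q = k + 1 gives
   a_m <= (m / n) (C1 a_n + C0) + O_n(1), hence
   limsup a_m / m <= (C1 a_n + C0) / n for every n > 0.  Taking arbitrarily
   large n with a_n / n below some t > liminf, then letting C1 -> 1, yields
   limsup <= liminf. *)

Section limn_esup_einf_near.
Context {R : realType}.
Implicit Types (u : (\bar R)^nat) (x : \bar R).
Local Open Scope ereal_scope.

Lemma limn_esup_le_near u x :
  (\forall n \near \oo, u n <= x) -> limn_esup u <= x.
Proof.
move=> ux; apply: (@le_trans _ _ (ereal_sup (u @` [set n | u n <= x]))).
  by apply: ereal_inf_lbound; exists [set n | u n <= x].
by apply: ge_ereal_sup => _ [n /= unx <-].
Qed.

Lemma limn_einf_lt_near {u x} {P : nat -> Prop} :
  limn_einf u < x -> (\forall n \near \oo, P n) -> exists2 n, P n & u n < x.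
Proof.
move=> ux Pn; apply: contrapT => noPn.
suff : x <= limn_einf u by rewrite leNgt ux.
rewrite /limn_einf leeNr; apply: limn_esup_le_near.
near=> n; rewrite leeN2 leNgt; apply/negP => unx.
by apply: noPn; exists n => //; near: n.
Unshelve. all: by end_near. Qed.

Lemma lee_gtEFin x y : (forall t : R, x < t%:E -> y <= t%:E) -> y <= x.
Proof.
case: x => [l| |] ylt; rewrite ?leey //.
- by apply/lee_addgt0Pr => e e0; rewrite -EFinD ylt // lte_fin ltrDl.
- by rewrite (eq_ninfty (fun t => ylt t (ltNyr t))).
Qed.

End limn_esup_einf_near.

Lemma nbhs_infty_divr_natr_le (R : archiRealFieldType) (c e : R) : 0 < e ->
  \forall n \near \oo, c / n%:R <= e.
Proof.
move=> e_gt0; near=> n.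
have n_gt0 : 0 < n%:R :> R by near: n; exact: nbhs_infty_gtr.
rewrite ler_pdivrMr // -ler_pdivrMl // mulrC; apply: ltW.
by near: n; exact: nbhs_infty_gtr.
Unshelve. all: by end_near. Qed.

Section quasi_subadditive.
Context {R : realType} {a : nat -> R} {C1 C0 : R}.
Hypothesis C1_ge0 : 0 <= C1.
Hypothesis a_split : forall (q : nat) (m : 'I_q -> nat), (2 <= q)%N ->
  a (\sum_(i < q) m i)%N <= C1 * \sum_(i < q) a (m i) + q%:R * C0.

Local Notation u := (fun n : nat => (a n / n%:R)%:E).

Lemma le_split_divn {n m} : (0 < n)%N -> (n <= m)%N ->
  a m <= (m %/ n)%:R * (C1 * a n + C0) + (C1 * a (m %% n) + C0).
Proof.
move=> n_gt0 nm; set k := (m %/ n)%N; set r := (m %% n)%N.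
have k_gt0 : (0 < k)%N by rewrite divn_gt0.
pose f (i : 'I_k.+1) := if (i < k)%N then n else r.
have f_lt (i : 'I_k) : f (widen_ord (leqnSn k) i) = n by rewrite /f /= ltn_ord.
have := a_split _ f; rewrite ltnS k_gt0 => /(_ isT).
have f_max : f ord_max = r by rewrite /f /= ltnn.
rewrite !big_ord_recr /= f_max.
under eq_bigr do rewrite f_lt.
under [X in C1 * (X + _)]eq_bigr do rewrite f_lt.
rewrite sum_nat_const sumr_const !card_ord [(k * n + r)%N](esym (divn_eq m n)).
suff -> : C1 * (a n *+ k + a r) + k.+1%:R * C0 =
  k%:R * (C1 * a n + C0) + (C1 * a r + C0) by [].
by rewrite -mulr_natl -addn1 natrD; ring.
Qed.

Lemma le_split_linear {n} : (0 < n)%N -> exists B, forall m, (n <= m)%N ->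
  a m <= m%:R * ((C1 * a n + C0) / n%:R) + B.
Proof.
move=> n_gt0; set X := C1 * a n + C0; set S : R := \sum_(r < n) `|a r|.
exists (C1 * S + C0 + `|X|) => m nm.
apply: le_trans (le_split_divn n_gt0 nm) _.
set r := (m %% n)%N; have r_lt : (r < n)%N by rewrite ltn_mod.
have n_gt0' : 0 < n%:R :> R by rewrite ltr0n.
have mE : m%:R / n%:R = (m %/ n)%:R + r%:R / n%:R :> R.
  by rewrite {1}(divn_eq m n) natrD natrM; field; rewrite gt_eqF.
have ar_le : C1 * a r <= C1 * S.
  rewrite ler_wpM2l //; apply: le_trans (ler_norm _) _.
  by rewrite /S (bigD1 (Ordinal r_lt)) //= lerDl sumr_ge0.
have /andP[rX_ge _] : - `|X| <= r%:R / n%:R * X <= `|X|.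
  rewrite -ler_norml normrM ger0_norm ?divr_ge0 // ler_piMl //.
  by rewrite ler_pdivrMr // mul1r ler_nat ltnW.
rewrite -/X mulrCA mE (mulrC X) mulrDl; lra.
Qed.

Lemma limn_esup_le_split {n} : (0 < n)%N ->
  (limn_esup u <= ((C1 * a n + C0) / n%:R)%:E)%E.
Proof.
move=> n_gt0; have [B aB] := le_split_linear n_gt0.
apply/lee_addgt0Pr => d d_gt0; apply: limn_esup_le_near.
near=> m; rewrite -EFinD lee_fin.
have m_gt0 : 0 < m%:R :> R by near: m; exact: nbhs_infty_gtr.
have Bd : B / m%:R <= d by near: m; exact: nbhs_infty_divr_natr_le.
rewrite ler_pdivrMr //; apply: le_trans (aB m _) _; first by near: m; exists n.
by rewrite [(_ + d) * _]mulrDl [m%:R * _]mulrC lerD2l -ler_pdivrMr.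
Unshelve. all: by end_near. Qed.

Lemma limn_esup_le_mulr {t} : (limn_einf u < t%:E)%E ->
  (limn_esup u <= (C1 * t)%:E)%E.
Proof.
move=> ut; apply/lee_addgt0Pr => e e_gt0.
have Pn : \forall n \near \oo, (0 < n)%N /\ C0 / n%:R <= e.
  near=> n; split; near: n; first by exists 1%N.
  exact: nbhs_infty_divr_natr_le.
have [n [n_gt0 C0n] unt] := limn_einf_lt_near ut Pn.
apply: le_trans (limn_esup_le_split n_gt0) _; rewrite -EFinD lee_fin.
rewrite mulrDl -mulrA lerD // ler_wpM2l //; move: unt; rewrite lte_fin.
exact: ltW.
Unshelve. all: by end_near. Qed.

End quasi_subadditive.

Theorem lemma7 (R : realType) (a : nat -> R) :
  (forall C1 : R, 1 < C1 -> exists C0 : R, 0 <= C0 /\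
     forall (q : nat) (m : 'I_q -> nat), (2 <= q)%N ->
       a (\sum_(i < q) m i)%N <= C1 * \sum_(i < q) a (m i) + q%:R * C0) ->
  limn_einf (fun n : nat => ((a n) / n%:R)%:E) =
  limn_esup (fun n : nat => ((a n) / n%:R)%:E).
Proof.
move=> hyp; apply/eqP; rewrite eq_le limn_einf_sup /=.
apply: lee_gtEFin => t ut; apply/lee_addgt0Pr => e e_gt0.
have t1_gt0 : 0 < `|t| + 1 by rewrite ltr_pwDr // normr_ge0.
have C1_gt1 : 1 < 1 + e / (`|t| + 1) by rewrite ltrDl divr_gt0.
have [C0 [_ a_split]] := hyp _ C1_gt1.
have C1_ge0 := ltW (lt_trans ltr01 C1_gt1).
apply: le_trans (limn_esup_le_mulr C1_ge0 a_split ut) _.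
rewrite -EFinD lee_fin mulrDl mul1r lerD2l mulrAC -mulrA ler_piMr ?(ltW e_gt0) //.
by rewrite ler_pdivrMr // mul1r; have := ler_norm t; lra.
Qed.
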